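(* $WS(6) \geq 646$; that is, $\{1,\dots,646\}$ can be partitioned into $6$ weakly sum-free subsets.
   Context: A set $B\subseteq\mathbb{N}$ is weakly sum-free if for all $(a,b)\in B^2$ with $a\neq b$, $a+b\notin B$. $WS(n)$ is the largest $p$ such that $\{1,\dots,p\}$ can be partitioned into $n$ weakly sum-free subsets. *)

From mathcomp Require Import all_boot.
Set Implicit Arguments. Unset Strict Implicit. Unset Printing Implicit Defensive.

Definition weakly_sum_free (B : nat -> Prop) : Prop :=
  forall a b : nat, B a -> B b -> a <> b -> ~ B (a + b).

(* {1,...,p} can be partitioned into n weakly sum-free subsets:
   a map c assigning to each x in {1..p} a block c x : 'I_n (the blocks are
   the fibres, possibly empty), each block being weakly sum-free. *)
Definition WS_partitionable (n p : nat) : Prop :=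
  exists c : nat -> 'I_n,
    forall i : 'I_n,
      weakly_sum_free (fun x => 1 <= x <= p /\ c x = i).

(* The paper exhibits an explicit partition of {1, ..., 646} into 6 weakly
   sum-free blocks, found by computer search. Weak sum-freeness of a
   colouring is a finite condition on the pairs a < b with a + b <= 646, so
   it is decided by a boolean test, which is evaluated on that colouring. *)

From mathcomp Require Import all_boot zify.

Set Implicit Arguments.
Unset Strict Implicit.
Unset Printing Implicit Defensive.

(* [s] lists the colours of 1, 2, ..., size s. *)
Definition seq_colour (s : seq nat) (x : nat) : nat := nth 0 s x.-1.

(* For a fixed [a], position [j] of the zip holds the colours of [b] and
   [a + b] with [b = a + j.+1], so each [a] is checked in linear time. *)
Definition weakly_sum_free_colouring (s : seq nat) : bool :=
  all (fun a => all (fun bc => ~~ ((seq_colour s a == bc.1) && (bc.1 == bc.2)))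
                    (zip (drop a s) (drop a.*2 s)))
      (iota 1 (size s)).

Lemma weakly_sum_free_colouringP (s : seq nat) (a b : nat) :
    weakly_sum_free_colouring s -> 0 < a < b -> a + b <= size s ->
  ~ (seq_colour s a = seq_colour s b /\ seq_colour s b = seq_colour s (a + b)).
Proof.
move=> /allP free_s /andP[a_gt0 lt_ab] le_sum [col_ab col_bs].
have a_in : a \in iota 1 (size s) by rewrite mem_iota; lia.
have /(all_nthP (0, 0))/(_ (b - a).-1) := free_s a a_in.
rewrite size_zip !size_drop nth_zip_cond size_zip !size_drop !nth_drop /=.
have -> : a + (b - a).-1 = b.-1 by lia.
have -> : a.*2 + (b - a).-1 = (a + b).-1 by rewrite -addnn; lia.
have in_range : (b - a).-1 < minn (size s - a) (size s - a.*2).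
  by rewrite -addnn; lia.
rewrite in_range => /(_ isT).
by rewrite -/(seq_colour s b) -/(seq_colour s (a + b)) col_ab col_bs !eqxx.
Qed.

Lemma WS_partitionable_of_colouring (n : nat) (s : seq nat) :
    all (fun c => c < n.+1) s -> weakly_sum_free_colouring s ->
  WS_partitionable n.+1 (size s).
Proof.
move=> /allP colours_lt free_s.
exists (fun x => inord (seq_colour s x)) => i.
have colourE x : 1 <= x <= size s -> inord (seq_colour s x) = i ->
    seq_colour s x = i.
  move=> /andP[x_gt0 x_le] <-; rewrite inordK //.
  by apply/colours_lt/mem_nth; case: x x_gt0 x_le.
suff sum_ab a b : 1 <= a <= size s -> inord (seq_colour s a) = i ->
    1 <= b <= size s -> inord (seq_colour s b) = i -> a < b ->
    ~ (1 <= a + b <= size s /\ inord (seq_colour s (a + b)) = i).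
  move=> a b [a_in col_a] [b_in col_b] neq_ab.
  case: (ltngtP a b) => [lt_ab|lt_ba|] //; first exact: sum_ab.
  by rewrite addnC; exact: sum_ab.
move=> a_in col_a b_in col_b lt_ab [sum_in col_sum].
have ab_range : 0 < a < b by rewrite lt_ab andbT; case/andP: a_in.
have sum_le : a + b <= size s by case/andP: sum_in.
apply: (weakly_sum_free_colouringP free_s ab_range sum_le).
by rewrite (colourE a) // (colourE b) // (colourE (a + b)).
Qed.

Definition WS6_colouring : seq nat := [:: 4;0;1;1;0;5;5;4;0;1;1;0;4;5;4;0;1;1;0;4;3;4;0;1;1;0;4;5;5;0;1;1;5;4;3;4;5;1;1;3;4;3;3;3;1;1;3;4;3;3;3;1;1;3;4;5;3;3;1;1;1;4;0;5;4;1;1;5;4;0;0;4;1;1;1;4;0;0;4;1;1;1;4;0;0;4;1;1;1;4;0;0;4;1;1;1;4;0;0;4;1;1;1;4;0;0;4;1;1;1;4;0;0;4;1;1;1;4;0;0;4;1;1;1;4;0;0;4;1;1;1;4;3;5;4;3;1;1;4;3;3;4;3;1;1;4;3;3;4;3;1;1;4;2;3;4;5;1;1;4;5;2;4;0;1;1;4;2;5;4;0;1;1;4;2;2;4;0;1;1;4;2;2;4;0;1;1;4;2;2;4;0;1;1;4;2;2;4;0;1;1;4;2;2;4;0;1;1;4;2;2;4;0;1;5;4;2;2;5;0;1;1;5;2;2;4;5;5;3;4;5;2;3;3;1;3;3;3;2;3;3;3;3;3;3;2;3;3;3;5;3;3;2;5;2;3;0;5;4;2;2;5;2;0;0;5;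2;2;2;5;0;0;4;2;2;2;2;0;0;4;2;2;2;2;0;0;4;2;2;2;2;0;0;4;2;2;2;2;0;0;4;2;2;2;2;0;0;4;2;2;2;2;0;0;4;5;2;2;2;5;0;4;2;2;2;2;3;5;4;3;2;2;2;3;3;4;3;3;2;2;3;3;4;3;3;2;2;2;3;4;5;3;2;2;5;2;4;0;5;2;2;2;5;4;0;0;2;2;2;2;4;0;0;2;2;2;2;4;0;0;2;2;2;2;4;0;0;2;2;2;2;4;0;0;2;2;2;2;4;0;0;2;2;2;2;4;0;0;5;2;2;2;5;0;0;2;5;2;2;4;5;5;3;2;5;2;3;3;3;3;3;3;2;3;3;3;3;3;3;2;3;3;3;1;3;3;2;2;4;1;1;5;4;2;2;5;5;1;0;5;2;2;4;1;1;0;4;2;2;4;1;1;0;4;2;2;4;1;1;0;4;2;2;4;1;1;0;4;2;2;4;1;1;0;4;2;2;4;1;1;0;4;2;2;4;1;1;0;4;5;2;4;1;1;0;4;2;5;4;1;1;3;4;3;2;4;1;1;5;4;3;3;4;1;1;3;4;3;3;4;1;1;1;4;5;3;4;1;1;3;4;0;5;4;1;1;1;4;0;0;4;1;1;5;4;0;0;4;1;1;1;4;0;0;4;1;1;1;4;0;0;4;1;1;1;4;0;0;4;1;1;1;4;0;0;4;1;1;1;4;0;0;5;5;1;1;5;0;0;4;1;1;1;4;5;0;3;3;1;1;3;3;5;3;3;1;1;3;3;3;3;3;1;1;3;3;3;5;4;1;1;5;4;3;4;5].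

Theorem mainTheorem17 : WS_partitionable 6 646.
Proof.
have <- : size WS6_colouring = 646 by vm_compute.
apply: WS_partitionable_of_colouring; by vm_compute.
Qed.
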